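(* In the setting below, for all $i,j,k\in\{1,\dots,q\}$: (i) $[y_i,z_j]=[\tilde y_i,\tilde z_j]=0$ and $[\tilde y_i,z_j]=-[y_i,\tilde z_j]=\delta_{ij}A_\lambda$; (ii) $[y_i,y_j]=-[z_i,z_j]$, $[\tilde y_i,\tilde y_j]=-[\tilde z_i,\tilde z_j]$, $[y_i,\tilde y_j]=-[z_i,\tilde z_j]$; (iii) $[[y_i,y_j],y_k]=[[\tilde y_i,\tilde y_j],\tilde y_k]=0$, $[[y_i,y_j],\tilde y_k]=\langle\lambda,\lambda\rangle(\delta_{jk}y_i+\delta_{ik}y_j)$, $[[\tilde y_i,\tilde y_j],y_k]=-\langle\lambda,\lambda\rangle(\delta_{jk}\tilde y_i+\delta_{ik}\tilde y_j)$, $[[y_i,\tilde y_j],y_k]=-\langle\lambda,\lambda\rangle\delta_{jk}y_i$, $[[y_i,\tilde y_j],\tilde y_k]=\langle\lambda,\lambda\rangle\delta_{ik}\tilde y_j$; (iv) $[[y_i,y_j],z_k]=[[\tilde y_i,\tilde y_j],\tilde z_k]=0$, $[[y_i,y_j],\tilde z_k]=\langle\lambda,\lambda\rangle(\delta_{jk}z_i+\delta_{ik}z_j)$, $[[\tilde y_i,\tilde y_j],z_k]=-\langle\lambda,\lambda\rangle(\delta_{jk}\tilde z_i+\delta_{ik}\tilde z_j)$, $[[y_i,\tilde y_j],z_k]=-\langle\lambda,\lambda\rangle\delta_{jk}z_i$, $[[y_i,\tilde y_j],\tilde z_k]=\langle\lambda,\lambda\rangle\delta_{ik}\tilde z_j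$.
   Context: Setting: $(\mathfrak g,\mathfrak k,\theta)$ a reductive symmetric superpair of even type ($\mathfrak g$ finite-dimensional complex Lie superalgebra, $\theta$ even involution with $(+1)$-eigenspace $\mathfrak k$ and $(-1)$-eigenspace $\mathfrak p$, $\mathfrak g$ semisimple as $\mathfrak g_0$-module, $\mathfrak z(\mathfrak g)\subset\mathfrak g_0$, $b$ a fixed non-degenerate even supersymmetric $\mathfrak g$- and $\theta$-invariant bilinear form), with even Cartan subspace $\mathfrak a$ ($\mathfrak a\subset\mathfrak p_0$, $\mathfrak a=\mathfrak z_{\mathfrak p}(\mathfrak a)$, $\operatorname{ad}\mathfrak a|_{\mathfrak g_0}$ semisimple). $\mathfrak g^\lambda_j$ denotes the $\lambda$-weight space of $\mathfrak a$ in $\mathfrak g_j$, $\Sigma_j$ the nonzero weights in $\mathfrak g_j$, $m_{\lambda,1}=\dim\mathfrak g_1^\lambda$. $b|_{\mathfrak a}$ is non-degenerate; $A_\lambda\in\mathfrak a$ is defined by $b(A_\lambda,h)=\lambda(h)$ for $h\in\mathfrak a$, and $\langle\lambda,\lambda\rangle=b(A_\lambda,A_\lambda)$. Let $\lambda\in\bar\Sigma_1=\{\lambda\in\Sigma_1:2\lambda\notin\Sigma_0\}$. Known facts: $m_{\lambda,1}=2q$ is even and $b^\theta(x,y)=b(x,\theta y)$ is a symplectic form on $\mathfrak g_1^\lambda$. Let $x_1,\dots,x_q,\tilde x_1,\dots,\tilde x_q$ be a basis of $\mathfrak g_1^\lambda$ with $b^\theta(x_i,x_j)=b^\theta(\tilde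 x_i,\tilde x_j)=0$, $b^\theta(x_i,\tilde x_j)=2\delta_{ij}$, and write $x_j=y_j+z_j$, $\tilde x_j=\tilde y_j+\tilde z_j$ with $y_j,\tilde y_j\in\mathfrak k$, $z_j,\tilde z_j\in\mathfrak p$. (Then $[h,y_i]=\lambda(h)z_i$, $[h,z_i]=\lambda(h)y_i$ etc. for $h\in\mathfrak a$, and $b(y_i,\tilde y_j)=b(\tilde z_j,z_i)=\delta_{ij}$.) *)

From HB Require Import structures.
From mathcomp Require Import all_boot all_order all_algebra.
Set Implicit Arguments. Unset Strict Implicit. Unset Printing Implicit Defensive.
Import Order.TTheory GRing.Theory.
Local Open Scope ring_scope.

Section SuperLie.
Variables (K : fieldType) (L : vectType K).
Implicit Types (x y z : L).

Definition bilinear_map (f : L -> L -> L) :=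
  (forall (a : K) x y z, f (a *: x + y) z = a *: f x z + f y z) /\
  (forall (a : K) x y z, f x (a *: y + z) = a *: f x y + f x z).

Definition bilinear_form (f : L -> L -> K) :=
  (forall (a : K) x y z, f (a *: x + y) z = a * f x z + f y z) /\
  (forall (a : K) x y z, f x (a *: y + z) = a * f x y + f x z).

Definition lin_endo (f : L -> L) :=
  forall (a : K) x y, f (a *: x + y) = a *: f x + f y.

(* super sign (-1)^{|x||y|}; parity false = even, true = odd *)
Definition ssign (i j : bool) : K := (-1) ^+ (i && j).

(* Z/2-grading g = g_0 (+) g_1, with gr false = g_0, gr true = g_1 *)
Definition is_grading (gr : bool -> {vspace L}) :=
  (gr false + gr true)%VS = fullv /\ (gr false :&: gr true)%VS = 0%VS.

Definition is_lie_superalgebra (gr : bool -> {vspace L}) (br : L -> L -> L) :=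
  [/\ is_grading gr, bilinear_map br,
      forall i j x y, x \in gr i -> y \in gr j -> br x y \in gr (i (+) j),
      forall i j x y, x \in gr i -> y \in gr j -> br x y = - (ssign i j *: br y x) &
      forall i j x y z, x \in gr i -> y \in gr j ->
         br x (br y z) = br (br x y) z + ssign i j *: br y (br x z)].

Definition even_involution (gr : bool -> {vspace L}) (br : L -> L -> L) (th : L -> L) :=
  [/\ lin_endo th, forall x, th (th x) = x,
      forall i x, x \in gr i -> th x \in gr i &
      forall x y, th (br x y) = br (th x) (th y)].

Definition g0_stable (gr : bool -> {vspace L}) (br : L -> L -> L) (U : {vspace L}) :=
  forall x u, x \in gr false -> u \in U -> br x u \in U.

Definition semisimple_g0_module (gr : bool -> {vspace L}) (br : L -> L -> L) :=
  forall U : {vspace L}, g0_stable gr br U ->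
    exists W : {vspace L}, [/\ g0_stable gr br W, (U + W)%VS = fullv & (U :&: W)%VS = 0%VS].

Definition center_in_even (gr : bool -> {vspace L}) (br : L -> L -> L) :=
  forall x, (forall y, br x y = 0) -> x \in gr false.

Definition admissible_form (gr : bool -> {vspace L}) (br : L -> L -> L) (th : L -> L)
    (b : L -> L -> K) :=
  bilinear_form b /\
  [/\ forall x, (forall y, b x y = 0) -> x = 0,
      forall x y, x \in gr false -> y \in gr true -> b x y = 0,
      forall i j x y, x \in gr i -> y \in gr j -> b x y = ssign i j * b y x,
      forall x y z, b (br x y) z = b x (br y z) &
      forall x y, b (th x) (th y) = b x y].

(* (g, k, theta) reductive symmetric superpair of even type with form b;
   k = {x | th x = x}, p = {x | th x = - x} *)
Definition reductive_symmetric_superpair (gr : bool -> {vspace L}) (br : L -> L -> L)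
    (th : L -> L) (b : L -> L -> K) :=
  [/\ is_lie_superalgebra gr br, even_involution gr br th,
      semisimple_g0_module gr br, center_in_even gr br &
      admissible_form gr br th b].

(* even Cartan subspace a: a <= p_0, a = z_p(a), ad a |_{g_0} semisimple *)
Definition even_cartan_subspace (gr : bool -> {vspace L}) (br : L -> L -> L)
    (th : L -> L) (a : {vspace L}) :=
  [/\ (a <= gr false)%VS,
      forall h, h \in a -> th h = - h,
      forall x, x \in a <-> (th x = - x /\ forall h, h \in a -> br h x = 0) &
      forall h, h \in a -> exists s : seq L,
        [/\ all (fun v => v \in gr false) s,
            forall v, v \in s -> exists c : K, br h v = c *: v &
            (gr false <= <<s>>)%VS]].

Definition weight_vec (gr : bool -> {vspace L}) (br : L -> L -> L) (a : {vspace L})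
    (j : bool) (lam : L -> K) x :=
  x \in gr j /\ forall h, h \in a -> br h x = lam h *: x.

Definition is_root (gr : bool -> {vspace L}) (br : L -> L -> L) (a : {vspace L})
    (j : bool) (lam : L -> K) :=
  (exists h, h \in a /\ lam h != 0) /\
  (exists x, x != 0 /\ weight_vec gr br a j lam x).

Definition kpart (th : L -> L) x : L := 2^-1 *: (x + th x).
Definition ppart (th : L -> L) x : L := 2^-1 *: (x - th x).

End SuperLie.

(* Since 2λ is not an even root, λ-weight vectors commute, so for v, w in g_1^λ the
   brackets of the k- and p-parts of v and w are all expressed through u = [v, θ w], an
   element of g_0 commuting with a.  Its p-part lies in a, and the non-degeneracy of b on a
   (a consequence of ad a being semisimple on g_0) identifies it with b(v, θ w) A_λ; this
   gives (i) and (ii).  For (iii) and (iv), M = [k v1, k v2] is θ-fixed and centralises a,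
   so [M, -] preserves g_1^λ, on which b^θ is non-degenerate.  Hence [M, v] is determined
   by b(M, [v, θ v']), which invariance, the Jacobi identity and (i) reduce to values of
   b^θ on the symplectic basis. *)

From HB Require Import structures.
From mathcomp Require Import all_boot all_order all_algebra all_field ring.
Set Implicit Arguments. Unset Strict Implicit. Unset Printing Implicit Defensive.
Import Order.TTheory GRing.Theory.
Local Open Scope ring_scope.

Section LinearAlgebra.
Variables (K : fieldType) (vT : vectType K).

Lemma lfun_square_eq0 (f : 'End(vT)) (U : {vspace vT}) v :
  (f @: U <= U)%VS -> (U <= (U :&: lker f) + f @: U)%VS ->
  v \in U -> f (f v) = 0 -> f v = 0.
Proof.
move=> fU sU Uv ffv; set A := (U :&: lker f)%VS.
have capA0 : (A :&: f @: U = 0)%VS.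
  apply/eqP; rewrite -dimv_eq0 -leqn0 -(leq_add2l (\dim (A + f @: U))) addn0.
  by rewrite dimv_sum_cap limg_ker_dim dimvS.
have : f v \in (A :&: f @: U)%VS.
  by rewrite !memv_cap memv_ker ffv eqxx (subvP fU) ?memv_img.
by rewrite capA0 memv0 => /eqP.
Qed.

Lemma span_map_coef (I : finType) (f : I -> vT) v :
  v \in <<[seq f i | i <- enum I]>>%VS -> exists c : I -> K, v = \sum_i c i *: f i.
Proof.
rewrite span_def big_map big_enum /= => /memv_sumP [vs vsP ->].
have /fin_all_exists [c cP] i : exists c, vs i = c *: f i by apply/vlineP/vsP.
by exists c; apply: eq_bigr => i _.
Qed.

End LinearAlgebra.

Section LieSuperalgebra.
Variables (K : fieldType) (L : vectType K).
Variables (gr : bool -> {vspace L}) (br : {bilinear L -> L -> L}).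
Hypothesis lie : is_lie_superalgebra gr br.

Lemma grading_decomp x :
  exists2 x0, x0 \in gr false & exists2 x1, x1 \in gr true & x = x0 + x1.
Proof.
case: lie => [[grT _] _ _ _ _].
have /memv_addP[x0 x0E [x1 x1O ->]] : x \in (gr false + gr true)%VS by rewrite grT memvf.
by exists x0 => //; exists x1.
Qed.

Lemma br_graded i j x y : x \in gr i -> y \in gr j -> br x y \in gr (i (+) j).
Proof. by case: lie => _ _ + _ _; apply. Qed.

Lemma brC_even h x j : h \in gr false -> x \in gr j -> br x h = - br h x.
Proof.
case: lie => _ _ _ skew _ hE xj.
by rewrite (skew false j h x) // /ssign /= expr0 scale1r opprK.
Qed.

Lemma jacobi_even h y j z : h \in gr false -> y \in gr j ->
  br h (br y z) = br (br h y) z + br y (br h z).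
Proof.
by case: lie => _ _ _ _ jac hE yj; rewrite (jac false j) // /ssign /= expr0 scale1r.
Qed.

Lemma jacobi_odd v w z : v \in gr true -> w \in gr true ->
  br v (br w z) = br (br v w) z - br w (br v z).
Proof.
by case: lie => _ _ _ _ jac vO wO; rewrite (jac true true) // /ssign /= expr1 scaleN1r.
Qed.

End LieSuperalgebra.

Section Involution.
Variables (K : fieldType) (L : vectType K) (th : {linear L -> L}).
Hypotheses (thK : involutive th) (two_neq0 : (2 : K) != 0).

Fact kpart_is_linear : linear (kpart th).
Proof.
move=> c u v; rewrite /kpart linearP scalerA mulrC -scalerA -scalerDr.
by congr (_ *: _); rewrite scalerDr addrACA.
Qed.
HB.instance Definition _ := GRing.isLinear.Build K L L *:%R (kpart th) kpart_is_linear.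

Fact ppart_is_linear : linear (ppart th).
Proof.
move=> c u v; rewrite /ppart linearP scalerA mulrC -scalerA -scalerDr.
by congr (_ *: _); rewrite scalerBr opprD addrACA.
Qed.
HB.instance Definition _ := GRing.isLinear.Build K L L *:%R (ppart th) ppart_is_linear.

Lemma half_double (c : K) : 2^-1 * (c + c) = c.
Proof. by rewrite -mulr2n -[c *+ 2]mulr_natl mulKf. Qed.

Lemma eq_opp_eq0 (c : K) : c = - c -> c = 0.
Proof.
move/eqP; rewrite -subr_eq0 opprK -mulr2n -[c *+ 2]mulr_natl mulf_eq0.
by rewrite (negbTE two_neq0) => /eqP.
Qed.

Lemma kpart_add_ppart x : kpart th x + ppart th x = x.
Proof.
rewrite /kpart /ppart -scalerDr addrACA subrr addr0 -mulr2n -[x *+ 2]scaler_nat.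
by rewrite scalerA mulVf // scale1r.
Qed.

Lemma th_kpart x : th (kpart th x) = kpart th x.
Proof. by rewrite /kpart linearZ linearD thK addrC. Qed.

Lemma th_ppart x : th (ppart th x) = - ppart th x.
Proof. by rewrite /ppart linearZ linearB thK -scalerN opprB. Qed.

End Involution.

Section CartanSubspace.
Variables (K : fieldType) (L : vectType K) (gr : bool -> {vspace L}).
Variables (br : {bilinear L -> L -> L}) (th : {linear L -> L}) (b : {biscalar L}).
Variable a : {vspace L}.
Hypotheses (lie : is_lie_superalgebra gr br) (theta : even_involution gr br th).
Hypotheses (form : admissible_form gr br th b) (cartan : even_cartan_subspace gr br th a).
Hypothesis two_neq0 : (2 : K) != 0.

Local Notation kp := (kpart th).
Local Notation pp := (ppart th).
Local Notation ad h := (linfun (br h)).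

Lemma thK : involutive th. Proof. by case: theta. Qed.

Lemma th_gr i x : x \in gr i -> th x \in gr i. Proof. by case: theta => _ _ + _; apply. Qed.

Lemma th_br x y : th (br x y) = br (th x) (th y). Proof. by case: theta. Qed.

Lemma br_thl x y : br (th x) y = th (br x (th y)).
Proof. by rewrite th_br thK. Qed.

Lemma kpart_gr i x : x \in gr i -> kp x \in gr i.
Proof. by move=> xi; rewrite memvZ // memvD // th_gr. Qed.

Lemma ppart_gr i x : x \in gr i -> pp x \in gr i.
Proof. by move=> xi; rewrite memvZ // memvB // th_gr. Qed.

Lemma br_fixed_kpart m u : th m = m -> br m (kp u) = kp (br m u).
Proof. by move=> thm; rewrite /kpart linearZr_LR linearDr -{2}thm -th_br. Qed.

Lemma br_fixed_ppart m u : th m = m -> br m (pp u) = pp (br m u).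
Proof. by move=> thm; rewrite /ppart linearZr_LR linearBr -{2}thm -th_br. Qed.

Lemma b_nondeg x : (forall y, b x y = 0) -> x = 0.
Proof. by case: form => _ [+ _ _ _ _]; apply. Qed.

Lemma b_even_odd x y : x \in gr false -> y \in gr true -> b x y = 0.
Proof. by case: form => _ [_ + _ _ _]; apply. Qed.

Lemma bC_odd x y : x \in gr true -> y \in gr true -> b x y = - b y x.
Proof.
by case: form => _ [_ _ bC _ _] xO yO; rewrite (bC true true) // /ssign /= expr1 mulN1r.
Qed.

Lemma b_invariant x y z : b (br x y) z = b x (br y z).
Proof. by case: form => _ [_ _ _ + _]. Qed.

Lemma b_th x y : b (th x) (th y) = b x y.
Proof. by case: form => _ [_ _ _ _ +]. Qed.

Lemma b_thl x y : b (th x) y = b x (th y).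
Proof. by rewrite -[in LHS](thK y) b_th. Qed.

Lemma bC_th_odd v w : v \in gr true -> w \in gr true -> b v (th w) = - b w (th v).
Proof. by move=> vO wO; rewrite bC_odd ?th_gr // b_thl. Qed.

Lemma b_fixed_kpart m u : th m = m -> b m (kp u) = b m u.
Proof.
by move=> thm; rewrite /kpart linearZr_LR linearDr -{2}thm b_th half_double.
Qed.

Lemma b_anti_fixed u w : th u = - u -> th w = w -> b u w = 0.
Proof.
by move=> thu thw; apply: (eq_opp_eq0 two_neq0); rewrite -{1}b_th thu thw linearNl.
Qed.

Lemma cartan_even h : h \in a -> h \in gr false.
Proof. by case: cartan => sa _ _ _ /(subvP sa). Qed.

Lemma cartan_anti h : h \in a -> th h = - h.
Proof. by case: cartan => _ + _ _; apply. Qed.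

Lemma cartan_abelian h u : h \in a -> u \in a -> br h u = 0.
Proof. by case: cartan => _ _ mem _ ha /mem[_]; apply. Qed.

Lemma cartan_maximal u : th u = - u -> (forall h, h \in a -> br h u = 0) -> u \in a.
Proof. by case: cartan => _ _ mem _ thu hu; apply/mem. Qed.

Lemma cartan_br_th h u : h \in a -> br h (th u) = - th (br h u).
Proof. by move=> ha; rewrite th_br (cartan_anti ha) linearNl opprK. Qed.

Lemma cartan_br_kpart h u : h \in a -> br h (kp u) = pp (br h u).
Proof. by move=> ha; rewrite /kpart /ppart linearZr_LR linearDr cartan_br_th. Qed.

Lemma cartan_br_ppart h u : h \in a -> br h (pp u) = kp (br h u).
Proof. by move=> ha; rewrite /kpart /ppart linearZr_LR linearBr cartan_br_th ?opprK. Qed.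

Lemma b_ppart_cartan u h : h \in a -> b (pp u) h = b u h.
Proof.
move=> ha; rewrite /ppart linearZl_LR linearBl b_thl cartan_anti // linearNr opprK.
exact: half_double.
Qed.

Lemma cartan_ad_comm h h' v : h \in a -> h' \in a ->
  br h (br h' v) = br h' (br h v).
Proof.
move=> ha ha'; rewrite (jacobi_even lie _ (cartan_even ha) (cartan_even ha')).
by rewrite (cartan_abelian ha ha') linear0l add0r.
Qed.

Lemma ad_cartan_decomp h : h \in a ->
  (gr false <= (gr false :&: lker (ad h)) + ad h @: gr false)%VS.
Proof.
case: cartan => _ _ _ diag /diag[s [sE eig gr0s]].
apply: subv_trans gr0s _; apply/span_subvP => e es.
have e0 : e \in gr false by move/allP: sE; apply.
have [c hec] := eig e es.
have [c0|c_neq0] := eqVneq c 0.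
  by rewrite (subvP (addvSl _ _)) // memv_cap e0 memv_ker lfunE /= hec c0 scale0r.
apply: (subvP (addvSr _ _)); apply/memv_imgP; exists (c^-1 *: e); first by rewrite memvZ.
by rewrite lfunE /= linearZr_LR hec scalerA mulVf // scale1r.
Qed.

Lemma ad_cartan_sq_eq0 h v : h \in a -> v \in gr false ->
  br h (br h v) = 0 -> br h v = 0.
Proof.
move=> ha v0 hhv; have := lfun_square_eq0 _ (ad_cartan_decomp ha) v0.
rewrite !lfunE /=; apply=> //; apply/subvP=> _ /memv_imgP[u u0 ->].
by rewrite lfunE /= (br_graded lie (cartan_even ha) u0).
Qed.

(* Each step keeps only the ker (ad h)-component of the vector: the ad h-image component
   is b-orthogonal to u since b u [h, y] = b [u, h] y = 0. *)
Lemma cartan_form_centralizer u hs v : u \in a -> all (mem a) hs -> v \in gr false ->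
  exists2 z, z \in gr false & (forall h, h \in hs -> br h z = 0) /\ b u v = b u z.
Proof.
move=> ua; elim: hs => [|h hs IH] /=; first by exists v.
case/andP=> ha has /(IH has)[z z0 [zc ->]].
have /memv_addP[v0 v0K [_ /memv_imgP[y y0 ->] zE]] := subvP (ad_cartan_decomp ha) z z0.
move: v0K; rewrite memv_cap memv_ker lfunE /= => /andP[v00 /eqP hv0].
rewrite lfunE /= in zE; exists v0 => //; split; last first.
  by rewrite zE linearDr -b_invariant cartan_abelian // linear0l addr0.
move=> h'; rewrite inE => /predU1P[-> //|h'hs].
have h'a : h' \in a by move/allP: has; apply.
have h'v0 : br h' v0 = br h (- br h' y).
  by rewrite linearNr -cartan_ad_comm // -[LHS]subr0 -(zc _ h'hs) zE linearDr opprD addNKr.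
rewrite h'v0; apply: (ad_cartan_sq_eq0 ha).
  by rewrite memvN (br_graded lie (cartan_even h'a) y0).
by rewrite -h'v0 cartan_ad_comm // hv0 linear0r.
Qed.

Lemma cartan_form_nondeg u : u \in a -> (forall h, h \in a -> b u h = 0) -> u = 0.
Proof.
move=> ua uorth; apply: b_nondeg => v; have [v0 v00 [v1 v11 ->]] := grading_decomp lie v.
rewrite linearDr (b_even_odd (cartan_even ua) v11) addr0.
have basis_a : all (mem a) (vbasis a) by apply/allP=> h /vbasis_mem.
have [z z0 [zc ->]] := cartan_form_centralizer ua basis_a v00.
have {}zc h : h \in a -> br h z = 0.
  move=> ha; rewrite (coord_vbasis ha) linear_sumlz big1 // => i _.
  by rewrite linearZl_LR zc ?scaler0 // mem_nth ?size_tuple.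
rewrite -(kpart_add_ppart th two_neq0 z) linearDr.
rewrite (b_anti_fixed (cartan_anti ua) (th_kpart thK z)) add0r uorth //.
apply: cartan_maximal; first exact: th_ppart thK z.
by move=> h ha; rewrite cartan_br_ppart // zc // linear0.
Qed.

Lemma br_kpart_kpart u w : br u w = 0 -> br (kp u) (kp w) = 2^-1 *: kp (br u (th w)).
Proof.
move=> uw0; rewrite /kpart linearZl_LR linearZr_LR !linearDl !linearDr !br_thl thK uw0.
by rewrite linear0 add0r addr0.
Qed.

Lemma br_ppart_ppart u w : br u w = 0 ->
  br (pp u) (pp w) = - (2^-1 *: kp (br u (th w))).
Proof.
move=> uw0; rewrite /kpart /ppart linearZl_LR linearZr_LR !linearBl !linearBr !br_thl.
rewrite thK uw0.
by rewrite linear0 sub0r subr0 -opprD -!scalerN.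
Qed.

Lemma br_kpart_ppart u w : br u w = 0 ->
  br (kp u) (pp w) = - (2^-1 *: pp (br u (th w))).
Proof.
move=> uw0; rewrite /kpart /ppart linearZl_LR linearZr_LR !linearDl !linearBr !br_thl.
rewrite thK uw0.
by rewrite linear0 sub0r subr0 addrC -opprB -!scalerN.
Qed.

Lemma b_kpart_kpart u w : b u w = 0 -> b (kp u) (kp w) = 2^-1 * b u (th w).
Proof.
move=> uw0; rewrite /kpart linearZl_LR linearZr_LR !linearDl !linearDr b_th b_thl uw0.
by rewrite add0r addr0 half_double.
Qed.

Section RootSpace.
Variables (lam : L -> K) (Alam : L) (q : nat) (x xt : 'I_q -> L).
Hypothesis root : is_root gr br a true lam.
Hypothesis no_double_root : ~ is_root gr br a false (fun h => 2 * lam h).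
Hypotheses (Alam_a : Alam \in a) (Alam_dual : forall h, h \in a -> b Alam h = lam h).
Hypothesis weight_span : forall v, weight_vec gr br a true lam v <->
  v \in <<[seq x i | i <- enum 'I_q] ++ [seq xt i | i <- enum 'I_q]>>%VS.
Hypothesis bxx : forall i j, b (x i) (th (x j)) = 0.
Hypothesis bxtxt : forall i j, b (xt i) (th (xt j)) = 0.
Hypothesis bxxt : forall i j, b (x i) (th (xt j)) = 2 * (i == j)%:R.

Local Notation W := (weight_vec gr br a true lam).
Local Notation ll := (b Alam Alam).

Lemma weight_odd v : W v -> v \in gr true. Proof. by case. Qed.

Lemma weight_act v h : W v -> h \in a -> br h v = lam h *: v.
Proof. by case=> _; apply. Qed.

Lemma weightZ c v : W v -> W (c *: v).
Proof. by move/weight_span=> vX; apply/weight_span; rewrite memvZ. Qed.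

Lemma weightD v w : W v -> W w -> W (v + w).
Proof. by move=> /weight_span vX /weight_span wX; apply/weight_span; rewrite memvD. Qed.

Lemma weightB v w : W v -> W w -> W (v - w).
Proof. by move=> vW /(weightZ (-1)); rewrite scaleN1r; apply: weightD. Qed.

Lemma weight_x i : W (x i).
Proof. by apply/weight_span/memv_span; rewrite mem_cat map_f ?mem_enum. Qed.

Lemma weight_xt i : W (xt i).
Proof. by apply/weight_span/memv_span; rewrite mem_cat map_f ?mem_enum ?orbT. Qed.

Lemma weight_ppart_act v h : W v -> h \in a -> br h (pp v) = lam h *: kp v.
Proof. by move=> vW ha; rewrite cartan_br_ppart // weight_act // linearZ. Qed.

Lemma weight_br_eq0 v w : W v -> W w -> br v w = 0.
Proof.
move=> vW wW; have [//|vw_neq0] := eqVneq (br v w) 0.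
case: no_double_root; split.
  case: root => -[h [ha lamh]] _; exists h; split => //.
  by rewrite mulf_neq0.
exists (br v w); split=> //; split.
  exact: (br_graded lie (weight_odd vW) (weight_odd wW)).
move=> h ha; rewrite (jacobi_even lie _ (cartan_even ha) (weight_odd vW)).
rewrite (weight_act vW ha) (weight_act wW ha) linearZl_LR linearZr_LR.
by rewrite -scalerDl -mulr2n mulr_natl.
Qed.

Lemma weight_b_eq0 v w : W v -> W w -> b v w = 0.
Proof.
move=> vW wW; case: root => -[h [ha lamh]] _.
suff /(eq_opp_eq0 two_neq0)/eqP : lam h * b v w = - (lam h * b v w).
  by rewrite mulf_eq0 (negbTE lamh) => /eqP.
rewrite -{1}(linearZl_LR b) -(weight_act vW ha) -[br h v]opprK.
rewrite -(brC_even lie (cartan_even ha) (weight_odd vW)).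
by rewrite linearNl b_invariant (weight_act wW ha) linearZr_LR.
Qed.

Lemma cartan_br_br_th v w h : W v -> W w -> h \in a -> br h (br v (th w)) = 0.
Proof.
move=> vW wW ha; rewrite (jacobi_even lie _ (cartan_even ha) (weight_odd vW)).
rewrite (cartan_br_th _ ha) (weight_act vW ha) (weight_act wW ha).
by rewrite linearZ_LR linearZl_LR linearNr linearZr_LR subrr.
Qed.

Lemma ppart_br_weight v w : W v -> W w -> pp (br v (th w)) = b v (th w) *: Alam.
Proof.
move=> vW wW; set w' := br v (th w); apply/subr0_eq/cartan_form_nondeg.
  rewrite memvB ?(memvZ _ Alam_a) //; apply: cartan_maximal => [|h ha].
    exact: th_ppart thK w'.
  by rewrite cartan_br_ppart // cartan_br_br_th // linear0.
move=> h ha; rewrite linearBl b_ppart_cartan // linearZl_LR /= Alam_dual //.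
rewrite /w' b_invariant (brC_even lie (cartan_even ha) (th_gr (weight_odd wW))).
rewrite (cartan_br_th _ ha) (weight_act wW ha) opprK linearZ_LR linearZr_LR.
by rewrite mulrC subrr.
Qed.

Lemma br_kpart_ppart_weight v w : W v -> W w ->
  br (kp v) (pp w) = - (2^-1 * b v (th w)) *: Alam.
Proof.
move=> vW wW; rewrite (br_kpart_ppart (weight_br_eq0 vW wW)) ppart_br_weight //.
by rewrite scalerA scaleNr.
Qed.

Lemma br_kpart_kpart_weight v w : W v -> W w ->
  br (kp v) (kp w) = - br (pp v) (pp w).
Proof.
move=> vW wW; have vw0 := weight_br_eq0 vW wW.
by rewrite (br_kpart_kpart vw0) (br_ppart_ppart vw0) opprK.
Qed.

Lemma weight_eq0 D : W D -> (forall v, W v -> b D (th v) = 0) -> D = 0.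
Proof.
move=> /weight_span; rewrite span_cat.
move=> /memv_addP[_ /span_map_coef[c ->] [_ /span_map_coef[d ->] ->]] Dorth.
have sum_delta (e : 'I_q -> K) m : \sum_i e i * (2 * (i == m)%:R) = 2 * e m.
  rewrite (bigD1 m) //= big1 => [|i /negbTE->]; last by rewrite !mulr0.
  by rewrite eqxx mulr1 addr0 mulrC.
have bxtx i j : b (xt i) (th (x j)) = - (2 * (i == j)%:R).
  rewrite (bC_th_odd (weight_odd (weight_xt i)) (weight_odd (weight_x j))).
  by rewrite bxxt eq_sym.
have c0 m : c m = 0.
  have := Dorth _ (weight_xt m); rewrite linearDl !linear_sumlz.
  under eq_bigr do rewrite linearZl_LR bxxt.
  under [X in _ + X]eq_bigr do rewrite linearZl_LR bxtxt mulr0.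
  rewrite big1_eq addr0 sum_delta => /eqP.
  by rewrite mulf_eq0 (negbTE two_neq0) => /eqP.
have d0 m : d m = 0.
  have := Dorth _ (weight_x m); rewrite linearDl !linear_sumlz.
  under eq_bigr do rewrite linearZl_LR bxx mulr0.
  under [X in _ + X]eq_bigr do rewrite linearZl_LR bxtx mulrN.
  rewrite big1_eq add0r sumrN sum_delta => /eqP.
  by rewrite oppr_eq0 mulf_eq0 (negbTE two_neq0) => /eqP.
by rewrite !big1 ?addr0 // => i _; rewrite ?c0 ?d0 scale0r.
Qed.

Section EvenBracket.
Variables v1 v2 : L.
Hypotheses (v1W : W v1) (v2W : W v2).
Let M := br (kp v1) (kp v2).

Let M_def : M = 2^-1 *: kp (br v1 (th v2)).
Proof. exact: br_kpart_kpart (weight_br_eq0 v1W v2W). Qed.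

Lemma th_br_kpart_weight : th M = M.
Proof. by rewrite M_def linearZ_LR (th_kpart thK). Qed.

Lemma br_kpart_weight_even : M \in gr false.
Proof. exact: (br_graded lie (kpart_gr (weight_odd v1W)) (kpart_gr (weight_odd v2W))). Qed.

Lemma cartan_br_br_kpart h : h \in a -> br h M = 0.
Proof.
move=> ha; rewrite M_def linearZr_LR cartan_br_kpart //.
by rewrite cartan_br_br_th // linear0 scaler0.
Qed.

Lemma weight_br_br_kpart v : W v -> W (br M v).
Proof.
move=> vW; split; first exact: (br_graded lie br_kpart_weight_even (weight_odd vW)).
move=> h ha; rewrite (jacobi_even lie _ (cartan_even ha) br_kpart_weight_even).
by rewrite cartan_br_br_kpart // linear0l add0r (weight_act vW ha) linearZr_LR.
Qed.

Lemma b_br_kpart_weight v v' : W v -> W v' -> b M (br v (th v')) =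
  ll * ((2^-1 * b v2 (th v)) * b v1 (th v') + (2^-1 * b v1 (th v)) * b v2 (th v')).
Proof.
move=> vW v'W; set w := br v (th v').
(* b M w = 2 b M [k v, k v'] = -2 b (k v1) [k v2, [p v, p v']], expanded by Jacobi. *)
have kk_half : b M (br (kp v) (kp v')) = 2^-1 * b M w.
  rewrite (br_kpart_kpart (weight_br_eq0 vW v'W)) linearZr_LR.
  by rewrite b_fixed_kpart ?th_br_kpart_weight.
move: kk_half; rewrite (br_kpart_kpart_weight vW v'W) linearNr /M b_invariant.
rewrite (jacobi_odd lie _ (kpart_gr (weight_odd v2W)) (ppart_gr (weight_odd vW))).
rewrite !br_kpart_ppart_weight // [br (_ *: Alam) _]linearZl_LR.
rewrite (weight_ppart_act v'W Alam_a) [br (pp v) _]linearZr_LR.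
rewrite (brC_even lie (cartan_even Alam_a) (ppart_gr (weight_odd vW))).
rewrite (weight_ppart_act vW Alam_a) (Alam_dual Alam_a).
have := b_kpart_kpart (weight_b_eq0 v1W vW); have := b_kpart_kpart (weight_b_eq0 v1W v'W).
(* Generalizing k v and k v' stops the linearity rewrites below from unfolding them. *)
move: (kp v) (kp v') => k k' bk' bk.
rewrite linearBr !linearZr_LR linearNr linearZr_LR bk bk' => E.
by apply: (mulfI (invr_neq0 two_neq0)); rewrite -E; ring.
Qed.

Lemma br_br_kpart_weight v : W v ->
  br M v = ll *: ((2^-1 * b v2 (th v)) *: v1 + (2^-1 * b v1 (th v)) *: v2).
Proof.
move=> vW; apply/subr0_eq/weight_eq0 => [|v' v'W].
  by apply: weightB (weight_br_br_kpart vW) _; apply/weightZ/weightD; apply/weightZ.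
by rewrite linearBl b_invariant b_br_kpart_weight // linearZl_LR linearDl !linearZl_LR subrr.
Qed.

Lemma br_br_kpart_kpart v : W v ->
  br M (kp v) = ll *: ((2^-1 * b v2 (th v)) *: kp v1 + (2^-1 * b v1 (th v)) *: kp v2).
Proof.
move=> vW; rewrite (br_fixed_kpart _ th_br_kpart_weight) br_br_kpart_weight //.
by rewrite (linearZ_LR (kpart th)) (linearD (kpart th)) !(linearZ_LR (kpart th)).
Qed.

Lemma br_br_kpart_ppart v : W v ->
  br M (pp v) = ll *: ((2^-1 * b v2 (th v)) *: pp v1 + (2^-1 * b v1 (th v)) *: pp v2).
Proof.
move=> vW; rewrite (br_fixed_ppart _ th_br_kpart_weight) br_br_kpart_weight //.
by rewrite (linearZ_LR (ppart th)) (linearD (ppart th)) !(linearZ_LR (ppart th)).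
Qed.

End EvenBracket.
End RootSpace.
End CartanSubspace.

Section Bundling.
Variables (K : fieldType) (L : vectType K).

Lemma bilinear_map_bundled (br : L -> L -> L) :
  bilinear_map br -> exists f : {bilinear L -> L -> L}, br = f.
Proof.
case=> brl brr; have brP : bilinear_for *:%R *:%R br.
  by split=> [u' c u v | u c u' v]; [apply: brl | apply: brr].
pose f : {bilinear L -> L -> L} :=
  HB.pack br (bilinear_isBilinear.Build K L L L *:%R *:%R br brP).
by exists f.
Qed.

Lemma bilinear_form_bundled (b : L -> L -> K) :
  bilinear_form b -> exists f : {biscalar L}, b = f.
Proof.
case=> bl br; have bP : bilinear_for ( *%R : K -> K^o -> K^o) *%R b.
  by split=> [u' c u v | u c u' v]; [apply: bl | apply: br].
pose f : {biscalar L} :=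
  HB.pack (b : L -> L -> K^o) (bilinear_isBilinear.Build K L L K^o *%R *%R b bP).
by exists f.
Qed.

Lemma lin_endo_bundled (th : L -> L) :
  lin_endo th -> exists f : {linear L -> L}, th = f.
Proof.
move=> thP; pose f : {linear L -> L} := HB.pack th (GRing.isLinear.Build K L L *:%R th thP).
by exists f.
Qed.

End Bundling.

Theorem mainTheorem8 (K : closedFieldType) (L : vectType K)
  (gr : bool -> {vspace L}) (br : L -> L -> L) (th : L -> L) (b : L -> L -> K)
  (a : {vspace L}) (lam : L -> K) (Alam : L) (q : nat) (x xt : 'I_q -> L) :
  [pchar K] =i pred0 ->
  reductive_symmetric_superpair gr br th b ->
  even_cartan_subspace gr br th a ->
  is_root gr br a true lam ->
  ~ is_root gr br a false (fun h => 2 * lam h) ->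
  Alam \in a -> (forall h, h \in a -> b Alam h = lam h) ->
  free ([seq x i | i <- enum 'I_q] ++ [seq xt i | i <- enum 'I_q]) ->
  (forall v, weight_vec gr br a true lam v <->
             v \in <<[seq x i | i <- enum 'I_q] ++ [seq xt i | i <- enum 'I_q]>>%VS) ->
  (forall i j, b (x i) (th (x j)) = 0) ->
  (forall i j, b (xt i) (th (xt j)) = 0) ->
  (forall i j, b (x i) (th (xt j)) = 2 * (i == j)%:R) ->
  let y i := kpart th (x i) in
  let z i := ppart th (x i) in
  let yt i := kpart th (xt i) in
  let zt i := ppart th (xt i) in
  let ll := b Alam Alam in
  forall i j k : 'I_q,
  (* (i) *)
  (br (y i) (z j) = 0 /\ br (yt i) (zt j) = 0 /\
   br (yt i) (z j) = (i == j)%:R *: Alam /\ br (y i) (zt j) = - ((i == j)%:R *: Alam)) /\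
  (* (ii) *)
  (br (y i) (y j) = - br (z i) (z j) /\ br (yt i) (yt j) = - br (zt i) (zt j) /\
   br (y i) (yt j) = - br (z i) (zt j)) /\
  (* (iii) *)
  (br (br (y i) (y j)) (y k) = 0 /\ br (br (yt i) (yt j)) (yt k) = 0 /\
   br (br (y i) (y j)) (yt k) = ll *: ((j == k)%:R *: y i + (i == k)%:R *: y j) /\
   br (br (yt i) (yt j)) (y k) = - (ll *: ((j == k)%:R *: yt i + (i == k)%:R *: yt j)) /\
   br (br (y i) (yt j)) (y k) = - (ll *: ((j == k)%:R *: y i)) /\
   br (br (y i) (yt j)) (yt k) = ll *: ((i == k)%:R *: yt j)) /\
  (* (iv) *)
  (br (br (y i) (y j)) (z k) = 0 /\ br (br (yt i) (yt j)) (zt k) = 0 /\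
   br (br (y i) (y j)) (zt k) = ll *: ((j == k)%:R *: z i + (i == k)%:R *: z j) /\
   br (br (yt i) (yt j)) (z k) = - (ll *: ((j == k)%:R *: zt i + (i == k)%:R *: zt j)) /\
   br (br (y i) (yt j)) (z k) = - (ll *: ((j == k)%:R *: z i)) /\
   br (br (y i) (yt j)) (zt k) = ll *: ((i == k)%:R *: zt j)).
Proof.
move=> char0 [lie theta _ _ form] cartan root no_double Alam_a Alam_dual _ span.
move=> bxx bxtxt bxxt.
have two_neq0 : (2 : K) != 0 by move/pcharf0P: char0 => ->.
have [brB brE] : exists f : {bilinear L -> L -> L}, br = f.
  by case: lie => _ /bilinear_map_bundled.
have [thB thE] : exists f : {linear L -> L}, th = f.
  by case: theta => /lin_endo_bundled.
have [bB bE] : exists f : {biscalar L}, b = f.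
  by case: form => /bilinear_form_bundled.
subst br th b.
have Wx := weight_x span; have Wxt := weight_xt span.
have bxtx i j : bB (xt i) (thB (x j)) = - (2 * (i == j)%:R).
  by rewrite (bC_th_odd theta form (weight_odd (Wxt i)) (weight_odd (Wx j))) bxxt eq_sym.
have BKP := br_kpart_ppart_weight lie theta form cartan two_neq0 root no_double
  Alam_a Alam_dual.
have BKK := br_kpart_kpart_weight lie theta cartan two_neq0 root no_double.
have MK := br_br_kpart_kpart lie theta form cartan two_neq0 root no_double
  Alam_a Alam_dual span bxx bxtxt bxxt.
have MP := br_br_kpart_ppart lie theta form cartan two_neq0 root no_double
  Alam_a Alam_dual span bxx bxtxt bxxt.
move=> y z yt zt ll i j k; rewrite {}/y {}/z {}/yt {}/zt {}/ll.
split; [|split; [|split]].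
- rewrite !BKP // !bxx !bxtxt !bxtx !bxxt !mulr0 oppr0 scale0r mulrN opprK (mulKf two_neq0).
  by rewrite scaleNr.
- by rewrite !BKK.
- rewrite !MK // !bxx !bxtxt !bxtx !bxxt !mulr0 !scale0r ?add0r ?addr0 scaler0.
  by rewrite !mulrN !(mulKf two_neq0) !scaleNr -opprD !scalerN.
- rewrite !MP // !bxx !bxtxt !bxtx !bxxt !mulr0 !scale0r ?add0r ?addr0 scaler0.
  by rewrite !mulrN !(mulKf two_neq0) !scaleNr -opprD !scalerN.
Qed.
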